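(* Let $K$ be a valued field, $d\ge 1$, and $X\subseteq K^d$. Suppose that for all $x,y,z\in X$ and all $\alpha,\beta,\gamma\in\mathcal{O}$ with $\alpha+\beta+\gamma=1$ we have $\alpha x+\beta y+\gamma z\in X$. Then $X$ is convex.
   Context: $K$ is a field with a (Krull) valuation $\nu:K\to\Gamma\cup\{\infty\}$, valuation ring $\mathcal{O}=\{x:\nu(x)\ge 0\}$, maximal ideal $\mathfrak{m}=\{x:\nu(x)>0\}$ and residue field $k=\mathcal{O}/\mathfrak{m}$. A set $X\subseteq K^d$ is convex if for every $n\ge 1$, all $x_1,\dots,x_n\in X$ and all $\alpha_1,\dots,\alpha_n\in\mathcal{O}$ with $\alpha_1+\dots+\alpha_n=1$, we have $\alpha_1x_1+\dots+\alpha_nx_n\in X$ (such a sum is called a convex combination). *)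

From mathcomp Require Import all_boot all_order all_algebra.
Set Implicit Arguments. Unset Strict Implicit. Unset Printing Implicit Defensive.
Import GRing.Theory.
Local Open Scope ring_scope.

(* Value group: an abelian group G (zmodType) with a relation [le] that is a
   translation-invariant total order.  The value "infinity" is [None]. *)
Definition ordered_abelian_group (G : zmodType) (le : rel G) : Prop :=
  [/\ reflexive le, transitive le, antisymmetric le, total le
    & forall a b c : G, le a b -> le (a + c) (b + c)].

Definition le_inf (G : zmodType) (le : rel G) (a b : option G) : bool :=
  match a, b with
  | _, None => true
  | None, Some _ => false
  | Some x, Some y => le x y
  end.

Definition add_inf (G : zmodType) (a b : option G) : option G :=
  match a, b with
  | Some x, Some y => Some (x + y)
  | _, _ => None
  end.

Definition min_inf (G : zmodType) (le : rel G) (a b : option G) : option G :=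
  if le_inf le a b then a else b.

Definition is_valuation (K : fieldType) (G : zmodType) (le : rel G)
    (nu : K -> option G) : Prop :=
  [/\ ordered_abelian_group le,
      forall x : K, nu x = None <-> x = 0,
      forall x y : K, nu (x * y) = add_inf (nu x) (nu y)
    & forall x y : K, le_inf le (min_inf le (nu x) (nu y)) (nu (x + y))].

Definition val_ring (K : fieldType) (G : zmodType) (le : rel G)
    (nu : K -> option G) (x : K) : Prop :=
  le_inf le (Some 0) (nu x).

Definition convex (K : fieldType) (O : K -> Prop) (d : nat)
    (X : 'rV[K]_d -> Prop) : Prop :=
  forall (n : nat) (x : 'I_n -> 'rV[K]_d) (alpha : 'I_n -> K),
    (0 < n)%N ->
    (forall i, X (x i)) ->
    (forall i, O (alpha i)) ->
    \sum_(i < n) alpha i = 1 ->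
    X (\sum_(i < n) alpha i *: x i).

From mathcomp Require Import all_boot all_order all_algebra.
Import GRing.Theory.
Local Open Scope ring_scope.

(* Call X "ternary-closed" when it contains every combination
   a x + b y + c z of its points with a, b, c in O and a + b + c = 1.
   Taking the coefficients (1, a, -a) shows that X is closed under the
   translations p + a (q - r) with a in O.  An affine combination of
   x_0, ..., x_n can be rewritten around the base point x_0 as
   x_0 + sum_i alpha_i (x_i - x_0); such a "based" combination is built by
   moving the base point one step at a time, b' = b + alpha_0 (x_0 - b),
   while translating the remaining points by the same vector, which keeps
   every difference x_i - b unchanged.  Induction on the number of points
   thus shows ternary-closed sets are convex, for any O containing 1 and
   closed under negation.  The theorem follows since the valuation ring of
   a Krull valuation has these two properties: nu 1 = nu (-1) = 0, the
   latter because an ordered abelian group has no element of order 2. *)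

Section TernaryClosed.
Variables (K : fieldType) (O : K -> Prop) (d : nat) (X : 'rV[K]_d -> Prop).
Hypothesis O1 : O 1.
Hypothesis ON : forall a, O a -> O (- a).
Hypothesis ternary_closed : forall (x y z : 'rV[K]_d) (alpha beta gamma : K),
  X x -> X y -> X z -> O alpha -> O beta -> O gamma ->
  alpha + beta + gamma = 1 -> X (alpha *: x + beta *: y + gamma *: z).

Lemma translate_closed (p q r : 'rV[K]_d) (a : K) :
  X p -> X q -> X r -> O a -> X (p + a *: (q - r)).
Proof.
move=> Xp Xq Xr Oa.
have -> : p + a *: (q - r) = 1 *: p + a *: q + (- a) *: r.
  by rewrite scale1r scalerBr scaleNr addrA.
by apply: ternary_closed => //; [exact: ON | rewrite addrK].
Qed.

(* The base point is advanced to b + alpha_0 (x_0 - b) and the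
   other points are translated by alpha_0 (x_0 - b) as well. *)
Lemma based_combination_closed (n : nat) (b : 'rV[K]_d)
    (x : 'I_n -> 'rV[K]_d) (alpha : 'I_n -> K) :
  X b -> (forall i, X (x i)) -> (forall i, O (alpha i)) ->
  X (b + \sum_(i < n) alpha i *: (x i - b)).
Proof.
elim: n b x alpha => [|n IH] b x alpha Xb Xx Oa.
  by rewrite big_ord0 addr0.
pose v := alpha ord0 *: (x ord0 - b).
have Xb' : X (b + v) by exact: translate_closed.
have Xx' i : X (x (lift ord0 i) + v) by exact: translate_closed.
have shift i : x (lift ord0 i) + v - (b + v) = x (lift ord0 i) - b.
  by rewrite opprD addrACA subrr addr0.
have := IH (b + v) (fun i => x (lift ord0 i) + v) (fun i => alpha (lift ord0 i))
  Xb' Xx' (fun i => Oa _).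
under eq_bigr => i _ do rewrite shift.
by rewrite big_ord_recl addrA.
Qed.

(* Ternary-closed sets are convex: an affine combination is a combination
   based at its first point. *)
Lemma ternary_closed_convex : convex O X.
Proof.
move=> [//|n] x alpha _ Xx Oa sum1.
have -> : \sum_(i < n.+1) alpha i *: x i
        = x ord0 + \sum_(i < n.+1) alpha i *: (x i - x ord0).
  rewrite [in RHS](eq_bigr (fun i => alpha i *: x i - alpha i *: x ord0));
    last by move=> i _; rewrite scalerBr.
  by rewrite sumrB -scaler_suml sum1 scale1r addrC subrK.
exact: based_combination_closed.
Qed.

End TernaryClosed.

(* An ordered abelian group has no element of order 2: adding h to the
   comparison of 0 and h yields the reverse comparison of h and h + h = 0. *)
Lemma ordered_group_double_eq0 {G : zmodType} {le : rel G} {h : G} :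
  ordered_abelian_group le -> h + h = 0 -> h = 0.
Proof.
case=> _ _ le_anti le_total le_add hh.
by case/orP: (le_total 0 h) => le0h; have := le_add _ _ h le0h;
  rewrite add0r hh => leh; apply: le_anti; rewrite le0h leh.
Qed.

Section ValuationRing.
Variables (K : fieldType) (G : zmodType) (le : rel G) (nu : K -> option G).
Hypothesis nu_valuation : is_valuation le nu.

Lemma valuation_finite {a : K} : a != 0 -> exists g, nu a = Some g.
Proof.
case: nu_valuation => _ nu_eqNone _ _ a0.
case E: (nu a) => [g|]; first by exists g.
by move/nu_eqNone: E a0 => ->; rewrite eqxx.
Qed.

(* nu 1 = nu 1 + nu 1 forces nu 1 = 0. *)
Lemma valuation1 : nu 1 = Some 0.
Proof.
case: nu_valuation => _ _ nuM _.
have [g nu1] := valuation_finite (oner_neq0 K).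
have := nuM 1 1; rewrite mulr1 nu1 /= => -[gg].
by congr Some; apply: (addrI g); rewrite -gg addr0.
Qed.

(* 2 nu (-1) = nu 1 = 0, and the value group is torsion-free in degree 2. *)
Lemma valuationN1 : nu (-1) = Some 0.
Proof.
case: nu_valuation => ogroup _ nuM _.
have N1_neq0 : (-1 : K) != 0 by rewrite oppr_eq0 oner_neq0.
have [g nuN1] := valuation_finite N1_neq0.
have := nuM (-1) (-1); rewrite mulrNN mulr1 valuation1 nuN1 /= => -[gg].
by rewrite (ordered_group_double_eq0 ogroup (esym gg)).
Qed.

Lemma val_ring1 : val_ring le nu 1.
Proof.
by case: nu_valuation => -[le_refl _ _ _ _] _ _ _; rewrite /val_ring valuation1 /=.
Qed.

(* nu (-a) = nu (-1) + nu a = nu a. *)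
Lemma val_ringN (a : K) : val_ring le nu a -> val_ring le nu (- a).
Proof.
case: nu_valuation => _ _ nuM _.
by rewrite /val_ring -mulN1r nuM valuationN1; case: (nu a) => //= g; rewrite add0r.
Qed.

End ValuationRing.

Theorem proposition2p5 (K : fieldType) (G : zmodType) (le : rel G)
    (nu : K -> option G) (d : nat) (X : 'rV[K]_d -> Prop) :
  is_valuation le nu ->
  (0 < d)%N ->
  (forall (x y z : 'rV[K]_d) (alpha beta gamma : K),
      X x -> X y -> X z ->
      val_ring le nu alpha -> val_ring le nu beta -> val_ring le nu gamma ->
      alpha + beta + gamma = 1 ->
      X (alpha *: x + beta *: y + gamma *: z)) ->
  convex (val_ring le nu) X.
Proof.
move=> nu_valuation _ ternary_closed.
apply: ternary_closed_convex ternary_closed.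
- exact: val_ring1.
- exact: val_ringN.
Qed.
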